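(* Let $\mathbf L$ be a locally compact non-discrete non-Archimedean field. Each ultrauniform space $(X,\mathbf P)$ has a topological embedding into $\prod_{\rho\in\mathbf P}B(c_0(\mathbf L,A_\rho),0,1)$ and a uniform embedding into $\prod_{\rho\in\mathbf P}c_0(\mathbf L,A_\rho)$, where $\mathrm{card}(A_\rho)=w(X_\rho)$.
   Context: An ultrauniform space $(X,\mathbf P)$ is a set with the uniformity generated by a family $\mathbf P$ of pseudoultrametrics. For $\rho\in\mathbf P$, $R_\rho$ is the equivalence relation $x R_\rho y\iff\rho(x,y)=0$ and $X_\rho$ is the completion of the ultrametric space $X/R_\rho$ (with the metric induced by $\rho$); $w$ denotes topological weight. $c_0(\mathbf L,A)$ is the Banach space of families in $\mathbf L$ indexed by $A$ tending to zero (for each $b>0$ only finitely many coordinates of absolute value $\ge b$) with sup norm, and $B(c_0(\mathbf L,A),0,1)$ its closed unit ball. *)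

From HB Require Import structures.
From mathcomp Require Import all_boot all_order all_algebra.
From mathcomp Require Import all_classical all_reals all_analysis.
Set Implicit Arguments. Unset Strict Implicit. Unset Printing Implicit Defensive.
Import Order.TTheory GRing.Theory Num.Theory.
Import numFieldNormedType.Exports.
Local Open Scope classical_set_scope.
Local Open Scope ring_scope.

Definition nonarch_abs (R : realType) (L : fieldType) (v : L -> R) : Prop :=
  [/\ forall x, 0 <= v x,
      forall x, v x = 0 <-> x = 0,
      forall x y, v (x * y) = v x * v y &
      forall x y, v (x + y) <= Num.max (v x) (v y)].

Definition Lopen (R : realType) (L : fieldType) (v : L -> R) (U : set L) : Prop :=
  forall x, U x -> exists2 e : R, 0 < e & forall y, v (y - x) < e -> U y.

Definition Lcompact (R : realType) (L : fieldType) (v : L -> R) (K : set L) : Prop :=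
  forall (J : Type) (U : J -> set L), (forall j, Lopen v (U j)) ->
    K `<=` \bigcup_j U j ->
    exists F : set J, finite_set F /\ K `<=` \bigcup_(j in F) U j.

Definition Llocally_compact (R : realType) (L : fieldType) (v : L -> R) : Prop :=
  forall x : L, exists K : set L, Lcompact v K /\
    exists2 e : R, 0 < e & [set y | v (y - x) < e] `<=` K.

Definition Lnondiscrete (R : realType) (L : fieldType) (v : L -> R) : Prop :=
  exists x : L, ~ Lopen v [set x].

Definition pseudoultrametric (R : realType) (X : Type) (d : X -> X -> R) : Prop :=
  [/\ forall x, d x x = 0,
      forall x y, 0 <= d x y,
      forall x y, d x y = d y x &
      forall x y z, d x z <= Num.max (d x y) (d y z)].

Definition cauchy_seq (R : realType) (X : Type) (d : X -> X -> R) (s : nat -> X) : Prop :=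
  forall e : R, 0 < e -> exists N : nat,
    forall m n : nat, (N <= m)%N -> (N <= n)%N -> d (s m) (s n) < e.

(* distance of the completion between (classes of) Cauchy sequences *)
Definition compl_dist (R : realType) (X : Type) (d : X -> X -> R) (s t : nat -> X) : R :=
  limn (fun n => d (s n) (t n)).

(* open sets of the completion, viewed on the set of Cauchy sequences *)
Definition compl_open (R : realType) (X : Type) (d : X -> X -> R)
    (U : set (nat -> X)) : Prop :=
  U `<=` cauchy_seq d /\
  forall s, U s -> exists2 e : R, 0 < e &
    forall t, cauchy_seq d t -> compl_dist d s t < e -> U t.

Definition is_base (T : Type) (opn : set T -> Prop) (B : set (set T)) : Prop :=
  (forall V, B V -> opn V) /\
  forall U, opn U -> forall x, U x -> exists V, [/\ B V, V x & V `<=` U].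

Definition has_weight (T : Type) (opn : set T -> Prop) (A : Type) : Prop :=
  (exists B, is_base opn B /\ ([set: A] #= B)%card) /\
  (forall B, is_base opn B -> ([set: A] #<= B)%card).

Definition in_c0 (R : realType) (L : fieldType) (v : L -> R) (A : Type) (u : A -> L) : Prop :=
  forall b : R, 0 < b -> finite_set [set a | b <= v (u a)].

Definition c0norm (R : realType) (L : fieldType) (v : L -> R) (A : Type) (u : A -> L) : R :=
  sup (range (fun a => v (u a))).

(* coordinate pseudometrics generating the product topology / uniformity *)
Definition prod_dist (R : realType) (L : fieldType) (v : L -> R) (I : Type) (A : I -> Type)
    (i : I) (F G : forall j, A j -> L) : R :=
  c0norm v (fun a => F i a - G i a).

(* topological embedding between spaces whose topologies are generated by
   the families of pseudometrics P (on X) and d (on Y) *)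
Definition top_embedding (R : realType) (I J : Type) (X Y : Type)
    (P : I -> X -> X -> R) (d : J -> Y -> Y -> R) (f : X -> Y) : Prop :=
  [/\ injective f,
      forall x (Jf : set J) (e : R), finite_set Jf -> 0 < e ->
        exists (K : set I) (del : R), [/\ finite_set K, 0 < del &
          forall y, (forall k, K k -> P k x y < del) ->
                    forall j, Jf j -> d j (f x) (f y) < e] &
      forall x (K : set I) (del : R), finite_set K -> 0 < del ->
        exists (Jf : set J) (e : R), [/\ finite_set Jf, 0 < e &
          forall y, (forall j, Jf j -> d j (f x) (f y) < e) ->
                    forall k, K k -> P k x y < del]].

Definition unif_embedding (R : realType) (I J : Type) (X Y : Type)
    (P : I -> X -> X -> R) (d : J -> Y -> Y -> R) (f : X -> Y) : Prop :=
  [/\ injective f,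
      forall (Jf : set J) (e : R), finite_set Jf -> 0 < e ->
        exists (K : set I) (del : R), [/\ finite_set K, 0 < del &
          forall x y, (forall k, K k -> P k x y < del) ->
                      forall j, Jf j -> d j (f x) (f y) < e] &
      forall (K : set I) (del : R), finite_set K -> 0 < del ->
        exists (Jf : set J) (e : R), [/\ finite_set Jf, 0 < e &
          forall x y, (forall j, Jf j -> d j (f x) (f y) < e) ->
                      forall k, K k -> P k x y < del]].

From mathcomp Require Import all_boot all_order all_algebra.
From mathcomp Require Import all_classical all_reals all_analysis.
From mathcomp Require Import lra.
From Stdlib Require Import ClassicalEpsilon.
Import Order.TTheory GRing.Theory Num.Theory.
Import numFieldNormedType.Exports.
Local Open Scope classical_set_scope.
Local Open Scope ring_scope.

Set Implicit Arguments. Unset Strict Implicit.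

(* Fix pi in L with 0 < |pi| = q < 1.  For a pseudoultrametric rho the relations
   "k = 0 or rho x y < q^k" are equivalences whose classes are the balls of
   level k.  Choose centres of these balls coherently from one level to the
   next.  Whenever the centre of x changes between levels k and k+1, pick a
   basic open set of the completion inside the new ball around the new centre;
   x gets the coordinate pi^(k+1) at the index of that basic set and 0
   elsewhere.  Different levels give different basic sets, so x has at most k
   coordinates of size >= q^k.  Points sharing a ball of level N share all
   coordinates of size > q^(N+1), and points separated at level j differ by
   q^j in some coordinate.  Hence ||f x - f y|| and rho x y determine each
   other up to a factor q, which gives a uniform, hence topological, embedding. *)

Section NonArchimedeanAbs.
Variables (R : realType) (L : fieldType) (v : L -> R).
Hypothesis hv : nonarch_abs v.

Lemma nabs0 : v 0 = 0.
Proof. by case: hv => _ h _ _; apply/h. Qed.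

Lemma nabs1 : v 1 = 1.
Proof.
case: hv => _ h hm _.
have v1_neq0 : v 1 != 0 by apply/eqP => /h/eqP; rewrite oner_eq0.
by apply: (mulfI v1_neq0); rewrite -hm !mulr1.
Qed.

Lemma nabsN z : v (- z) = v z.
Proof.
case: hv => hge _ hm _.
have sq : v (-1) * v (-1) = 1 by rewrite -hm mulrNN mulr1 nabs1.
have vN1 : v (-1) = 1 by have := hge (-1); nra.
by rewrite -mulN1r hm vN1 mul1r.
Qed.

Lemma nabsB a b : v (a - b) <= Num.max (v a) (v b).
Proof. by case: hv => _ _ _ hu; rewrite -(nabsN b); apply: hu. Qed.

Lemma nabsX z n : v (z ^+ n) = v z ^+ n.
Proof.
case: hv => _ _ hm _; elim: n => [|n IH]; first by rewrite !expr0 nabs1.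
by rewrite !exprS hm IH.
Qed.

Lemma nondiscrete_nabs_gt0_lt1 : Lnondiscrete v -> exists pi, 0 < v pi < 1.
Proof.
case=> x not_open.
have [y [y_neq_x y_near_x]] : exists y, y <> x /\ v (y - x) < 1.
  apply: NNPP => none; apply: not_open => _ ->; exists 1 => // y hy.
  by apply: NNPP => y_neq_x; apply: none; exists y.
exists (y - x); rewrite y_near_x andbT.
case: hv => hge h0 _ _; rewrite lt_neqAle hge andbT eq_sym.
by apply/eqP => /h0/eqP; rewrite subr_eq0 => /eqP.
Qed.

End NonArchimedeanAbs.

Lemma exists_expr_lt (R : realType) (q b : R) :
  0 <= q -> q < 1 -> 0 < b -> exists k, q ^+ k < b.
Proof.
move=> q_ge0 q_lt1 b_gt0.
have q_lt1' : `|q| < 1 by rewrite ger0_norm.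
have [k _ Hk] := cvgr_lt (FF := eventually_filter) _ (cvg_expr q_lt1') _ b_gt0.
by exists k; apply: Hk => /=.
Qed.

Section SupRange.
Variables (R : realType) (A : Type) (f : A -> R).

Lemma sup_range_le M : 0 <= M -> (forall a, f a <= M) -> sup (range f) <= M.
Proof.
move=> M_ge0 f_le; have [[a _]|A0] := pselect (exists a : A, True).
  apply: ge_sup; first by exists (f a), a.
  by move=> _ [a' _ <-]; apply: f_le.
suff -> : range f = set0 by rewrite sup0.
by apply/seteqP; split => // y [a _ _]; case: A0; exists a.
Qed.

Lemma le_sup_range M a : (forall a, f a <= M) -> f a <= sup (range f).
Proof. by move=> f_le; apply: ub_le_sup; [exists M => _ [a' _ <-] | exists a]. Qed.

End SupRange.

Section Pseudoultrametric.
Variables (R : realType) (X : Type) (rho : X -> X -> R).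
Hypothesis hr : pseudoultrametric rho.

Lemma pum_triangle x y z : rho x z <= rho x y + rho y z.
Proof.
case: hr => _ hge _ hu; apply: le_trans (hu x y z) _; rewrite ge_max.
by have := hge x y; have := hge y z => ? ?; apply/andP; split; lra.
Qed.

Lemma cauchy_seq_cst p : cauchy_seq rho (cst p).
Proof. by case: hr => h0 _ _ _ e e0; exists 0%N => m n _ _; rewrite h0. Qed.

Lemma pum_distB x y x' y' : `|rho x y - rho x' y'| <= rho x x' + rho y y'.
Proof.
case: hr => _ _ hs _.
have := pum_triangle x x' y; have := pum_triangle x' y' y.
have := pum_triangle x' x y'; have := pum_triangle x y y'.
rewrite (hs x' x) (hs y' y) => *; rewrite ler_norml; apply/andP; split; lra.
Qed.

Lemma cauchy_dist_cvg s t : cauchy_seq rho s -> cauchy_seq rho t ->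
  cvgn (fun n => rho (s n) (t n)).
Proof.
move=> cs ct; apply: cauchy_cvg; apply: cauchy_exP => e e_gt0.
have [N1 H1] := cs (e / 2) ltac:(lra); have [N2 H2] := ct (e / 2) ltac:(lra).
set M := maxn N1 N2; exists (rho (s M) (t M)), M => // n /=.
rewrite /M geq_max => /andP[n1 n2].
have [M1 M2] : (N1 <= M)%N /\ (N2 <= M)%N by rewrite leq_maxl leq_maxr.
suff : `|rho (s M) (t M) - rho (s n) (t n)| < e by [].
have := H1 _ _ M1 n1; have := H2 _ _ M2 n2; have := pum_distB (s M) (t M) (s n) (t n).
by move=> *; lra.
Qed.

Lemma compl_dist_lt_eventually s t e : cauchy_seq rho s -> cauchy_seq rho t ->
  compl_dist rho s t < e -> exists N, forall n, (N <= n)%N -> rho (s n) (t n) < e.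
Proof.
move=> cs ct lt_e.
by have [N _ HN] := cvgr_lt _ (cauchy_dist_cvg cs ct) _ lt_e; exists N => n /HN.
Qed.

End Pseudoultrametric.

Section Levels.
Variables (R : realType) (X : Type) (rho : X -> X -> R).
Hypothesis hr : pseudoultrametric rho.
Variable q : R.
Hypotheses (q_gt0 : 0 < q) (q_lt1 : q < 1).

Definition same_ball k x y := (k = 0)%N \/ rho x y < q ^+ k.

Lemma same_ball0 x y : same_ball 0 x y.
Proof. by left. Qed.

Lemma same_ball_refl k x : same_ball k x x.
Proof. by case: hr => h0 _ _ _; right; rewrite h0 exprn_gt0. Qed.

Lemma same_ball_sym k x y : same_ball k x y -> same_ball k y x.
Proof. by case: hr => _ _ hs _ [->|h]; [left | right; rewrite hs]. Qed.

Lemma same_ball_trans k x y z :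
  same_ball k x y -> same_ball k y z -> same_ball k x z.
Proof.
case: hr => _ _ _ hu [->|lt_xy]; first by left.
case=> [->|lt_yz]; first by left.
by right; apply: le_lt_trans (hu x y z) _; rewrite gt_max lt_xy lt_yz.
Qed.

Lemma exprq_le m n : (n <= m)%N -> q ^+ m <= q ^+ n.
Proof. by move=> nm; apply: ler_wiXn2l => //; apply: ltW. Qed.

Lemma same_ball_le k l x y : (k <= l)%N -> same_ball l x y -> same_ball k x y.
Proof.
move=> kl [l0|lt_xy]; first by left; move: kl; rewrite l0 leqn0 => /eqP.
by right; apply: lt_le_trans lt_xy (exprq_le kl).
Qed.

Variable x0 : X.

(* Keeping the old centre whenever possible is what makes the basic sets
   chosen at distinct levels distinct (basic_nbhd_inj). *)
Fixpoint center k x :=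
  if k is k'.+1 then
    if pselect (same_ball k (center k' x) x) then center k' x
    else epsilon (inhabits x0) (same_ball k x)
  else x0.

Lemma center_same_ball k x : same_ball k (center k x) x.
Proof.
case: k => [|k] /=; first by left.
case: pselect => [//|?]; apply: same_ball_sym.
apply: (epsilon_spec (inhabits x0) (same_ball k.+1 x)).
by exists x; apply: same_ball_refl.
Qed.

Lemma center_eq k x y : same_ball k x y -> center k x = center k y.
Proof.
elim: k => [//|k IH] xy /=; rewrite IH; last exact: same_ball_le xy.
have -> : same_ball k.+1 x = same_ball k.+1 y.
  by apply/funext => z; apply/propext; split; apply: same_ball_trans;
    [apply: same_ball_sym|].
case: pselect => [cx|ncx]; case: pselect => [cy|ncy] //; exfalso.
  by apply: ncy; apply: same_ball_trans cx xy.
by apply: ncx; apply: same_ball_trans cy (same_ball_sym xy).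
Qed.

Lemma center_stable k l x : (k < l)%N ->
  same_ball l (center k.+1 x) x -> center l x = center k.+1 x.
Proof.
elim: l => // l IH; rewrite ltnS leq_eqVlt => /predU1P[<- //|kl] cl /=.
have cl' : same_ball l (center k.+1 x) x by apply: same_ball_le cl.
by rewrite (IH kl cl'); case: pselect.
Qed.

Definition center_moves k x := ~ same_ball k.+1 (center k x) x.

Definition cball l p : set (nat -> X) :=
  [set s | cauchy_seq rho s /\
           exists N, forall n, (N <= n)%N -> same_ball l (s n) p].

Lemma cball_cst l p : cball l p (cst p).
Proof.
by split; [apply: cauchy_seq_cst | exists 0%N => n _; apply: same_ball_refl].
Qed.

Lemma cball_cst_same_ball l p p' : cball l p (cst p') -> same_ball l p' p.
Proof. by case=> _ [N HN]; apply: (HN N). Qed.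

Lemma cball_open l p : compl_open rho (cball l p).
Proof.
split=> [s [] //|s [cs [N HN]]]; exists (q ^+ l); first exact: exprn_gt0.
move=> t ct /(compl_dist_lt_eventually hr cs ct) [M HM]; split => //.
exists (maxn N M) => n; rewrite geq_max => /andP[Nn Mn].
by apply: same_ball_trans (HN n Nn); apply: same_ball_sym; right; apply: HM.
Qed.

Section Basis.
Variables (A : Type) (B : set (set (nat -> X))).
Hypothesis hB : is_base (compl_open rho) B.
Variable g : A -> set (nat -> X).
Hypothesis hg : set_bij [set: A] B g.

Definition basic_nbhd_spec k x V :=
  [/\ B V, V (cst (center k.+1 x)) & V `<=` cball k.+1 (center k.+1 x)].

Definition basic_nbhd k x := epsilon (inhabits set0) (basic_nbhd_spec k x).

Lemma basic_nbhdP k x : basic_nbhd_spec k x (basic_nbhd k x).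
Proof.
apply: (epsilon_spec (inhabits set0)); case: hB => _ base.
have [V [BV Vc sV]] := base _ (cball_open k.+1 (center k.+1 x)) _ (cball_cst _ _).
by exists V.
Qed.

Lemma basic_nbhd_cst k x p : basic_nbhd k x (cst p) -> same_ball k.+1 p x.
Proof.
have [_ _ sV] := basic_nbhdP k x => /sV/cball_cst_same_ball px.
exact: same_ball_trans px (center_same_ball _ _).
Qed.

Lemma basic_nbhd_eq k x y : same_ball k.+1 x y -> basic_nbhd k x = basic_nbhd k y.
Proof. by move=> xy; rewrite /basic_nbhd /basic_nbhd_spec (center_eq xy). Qed.

Lemma basic_nbhd_inj k l x : center_moves k x -> center_moves l x ->
  basic_nbhd k x = basic_nbhd l x -> k = l.
Proof.
wlog kl : k l / (k <= l)%N => [hwlog|].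
  by case/orP: (leq_total k l) => ? mk ml e; [|apply/esym]; apply: hwlog.
move=> _ ml e; case: ltngtP kl => // kl _; exfalso.
have [_ cV _] := basic_nbhdP k x; rewrite e in cV.
have /basic_nbhd_cst cl := cV.
by apply: ml; rewrite (center_stable kl (same_ball_le (leqnSn l) cl)).
Qed.

Lemma basic_nbhd_meet j k x y : (j <= k)%N ->
  basic_nbhd k y = basic_nbhd j x -> same_ball j.+1 x y.
Proof.
move=> jk e; have [_ cV _] := basic_nbhdP k y; rewrite e in cV.
apply: same_ball_trans (same_ball_sym (basic_nbhd_cst cV)) _.
by apply: same_ball_le (center_same_ball _ _); rewrite ltnS.
Qed.

Lemma same_ball_center_moves N k x y : same_ball N x y -> (k < N)%N ->
  center_moves k x -> center_moves k y /\ basic_nbhd k y = basic_nbhd k x.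
Proof.
move=> xy kN mx; have xy1 : same_ball k.+1 x y by apply: same_ball_le xy.
split; last by rewrite (basic_nbhd_eq xy1).
move=> cy; apply: mx; rewrite (center_eq (same_ball_le (ltnW kN) xy)).
exact: same_ball_trans cy (same_ball_sym xy1).
Qed.

Definition level_spec x a k := center_moves k x /\ basic_nbhd k x = g a.

Definition level x a : option nat :=
  if pselect (exists k, level_spec x a k) is left _
  then Some (xget 0%N (level_spec x a)) else None.

Lemma levelP x a k : level x a = Some k <-> level_spec x a k.
Proof.
rewrite /level; case: pselect => [ex|nex]; last first.
  by split=> // lk; case: nex; exists k.
have [mk ek] := xgetPex 0%N ex; split=> [[<-] //|[mk' ek']].
by congr Some; apply: (basic_nbhd_inj mk mk'); rewrite ek ek'.
Qed.

Lemma level_same_ball N x y a k : same_ball N x y -> (k < N)%N ->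
  level x a = Some k -> level y a = Some k.
Proof.
move=> xy kN /levelP[mx ex]; have [my ey] := same_ball_center_moves xy kN mx.
by apply/levelP; split; rewrite ?ey.
Qed.

Section Embedding.
Variables (L : fieldType) (v : L -> R).
Hypothesis hv : nonarch_abs v.
Variable pi : L.
Hypothesis v_pi : v pi = q.

Definition embed x a : L := if level x a is Some k then pi ^+ k.+1 else 0.

Lemma nabs_embed x a :
  v (embed x a) = if level x a is Some k then q ^+ k.+1 else 0.
Proof.
by rewrite /embed; case: level => [k|]; rewrite ?(nabsX hv) ?v_pi ?(nabs0 hv).
Qed.

Lemma nabs_embed_le x a N : ~ (exists2 k, level x a = Some k & (k < N)%N) ->
  v (embed x a) <= q ^+ N.+1.
Proof.
rewrite nabs_embed; case lx: level => [k|] low; last by rewrite ltW ?exprn_gt0.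
by apply: exprq_le; rewrite ltnS leqNgt; apply/negP => kN; apply: low; exists k.
Qed.

Lemma nabs_embedB_le N x y a : same_ball N x y ->
  v (embed x a - embed y a) <= q ^+ N.+1.
Proof.
move=> xy.
have [[k lx kN]|nx] := pselect (exists2 k, level x a = Some k & (k < N)%N).
  by rewrite /embed lx (level_same_ball xy kN lx) subrr (nabs0 hv) ?ltW ?exprn_gt0.
have [[k ly kN]|ny] := pselect (exists2 k, level y a = Some k & (k < N)%N).
  by case: nx; exists k => //; apply: level_same_ball (same_ball_sym xy) kN ly.
by apply: le_trans (nabsB hv _ _) _; rewrite ge_max !nabs_embed_le.
Qed.

Lemma nabs_embedB_center_moves j x y : same_ball j x y -> ~ same_ball j.+1 x y ->
  center_moves j x -> exists a, v (embed x a - embed y a) = q ^+ j.+1.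
Proof.
move=> xy nxy mx; case: hg => _ _ gsurj.
have [BV _ _] := basic_nbhdP j x; have [a _ ga] := gsurj _ BV.
have lx : level x a = Some j by apply/levelP.
suff ly : level y a = None by exists a; rewrite /embed lx ly subr0 (nabsX hv) v_pi.
case ly: level => [k|] //; have /levelP[my ey] := ly; rewrite ga in ey.
case: (ltnP k j) => [kj|jk]; last by case: nxy; apply: basic_nbhd_meet ey.
have [mx' ex] := same_ball_center_moves (same_ball_sym xy) kj my.
by move: kj; rewrite (basic_nbhd_inj mx' mx) ?ltnn // ex.
Qed.

Lemma nabs_embedB_ge j x y : ~ same_ball j x y ->
  exists a, q ^+ j <= v (embed x a - embed y a).
Proof.
elim: j => [|j IH] nxy; first by case: nxy; left.
have [xy|nxy'] := pselect (same_ball j x y); last first.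
  by have [a ha] := IH nxy'; exists a; apply: le_trans ha; apply: exprq_le.
have [mx|/contrapT cx] := pselect (center_moves j x).
  by have [a ha] := nabs_embedB_center_moves xy nxy mx; exists a; rewrite ha.
have my : center_moves j y.
  move=> cy; apply: nxy; rewrite (center_eq xy) in cx.
  exact: same_ball_trans (same_ball_sym cx) cy.
have nyx : ~ same_ball j.+1 y x by move/same_ball_sym.
have [a ha] := nabs_embedB_center_moves (same_ball_sym xy) nyx my.
by exists a; rewrite -(nabsN hv) opprB ha.
Qed.

Lemma embed_c0 x : in_c0 v (embed x).
Proof.
move=> b b_gt0; have [K qK] := exists_expr_lt (ltW q_gt0) q_lt1 b_gt0.
pose lvl a := if level x a is Some k then k else K.
apply: (@sub_finite_set _ _ (lvl @^-1` `I_K)); last first.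
  apply: finite_preimage; last exact: finite_II.
  move=> a1 a2; rewrite !inE /lvl /=.
  case l1: level => [k1|]; last by rewrite ltnn.
  case l2: level => [k2|]; last by rewrite ltnn.
  move=> _ _ e; rewrite e in l1; move: l1 l2 => /levelP[_ e1] /levelP[_ e2].
  by case: hg => _ ginj _; apply: ginj; rewrite ?inE // -e1 -e2.
move=> a /=; rewrite nabs_embed /lvl; case: level => [k|] bk; last first.
  by move: (lt_le_trans b_gt0 bk); rewrite ltxx.
rewrite ltnNge; apply/negP => Kk.
by move: (le_trans bk (exprq_le (leqW Kk))); rewrite leNgt qK.
Qed.

Lemma embed_norm_le1 x : c0norm v (embed x) <= 1.
Proof.
apply: sup_range_le => // a; rewrite nabs_embed.
by case: level => // k; rewrite exprn_ile1 ?ltW.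
Qed.

Lemma embed_dist_le N x y : rho x y < q ^+ N ->
  c0norm v (fun a => embed x a - embed y a) <= q ^+ N.+1.
Proof.
move=> lt_xy; apply: sup_range_le; first by rewrite ltW ?exprn_gt0.
by move=> a; apply: nabs_embedB_le; right.
Qed.

Lemma embed_dist_ge N x y : q ^+ N <= rho x y ->
  q ^+ N.+1 <= c0norm v (fun a => embed x a - embed y a).
Proof.
move=> ge_xy; have [|a ha] := nabs_embedB_ge (j := N.+1) (x := x) (y := y).
  case=> // lt_xy; have := le_lt_trans ge_xy lt_xy.
  by rewrite exprS ltr_pMl ?exprn_gt0 // => /(lt_trans q_lt1); rewrite ltxx.
apply: le_trans ha _; apply: (@le_sup_range _ _ _ (q ^+ 1)) => a'.
exact: nabs_embedB_le (same_ball0 _ _).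
Qed.

End Embedding.
End Basis.
End Levels.

Lemma exists_c0_embedding (R : realType) (L : fieldType) (v : L -> R)
    (hv : nonarch_abs v) (pi : L) (q_gt0 : 0 < v pi) (q_lt1 : v pi < 1)
    (X : Type) (rho : X -> X -> R) (hr : pseudoultrametric rho) (A : Type) :
  (exists B, is_base (compl_open rho) B /\ ([set: A] #= B)%card) ->
  exists h : X -> A -> L,
  [/\ forall x, in_c0 v (h x), forall x, c0norm v (h x) <= 1,
      forall N x y, rho x y < v pi ^+ N ->
        c0norm v (fun a => h x a - h y a) <= v pi ^+ N.+1 &
      forall N x y, v pi ^+ N <= rho x y ->
        v pi ^+ N.+1 <= c0norm v (fun a => h x a - h y a)].
Proof.
have [[x0 _]|X0] := pselect (exists x : X, True); last first.
  by move=> _; exists (fun _ _ => 0); split=> [x|x|N x|N x]; case: X0; exists x.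
move=> [B [hB /card_set_bijP[g hg]]].
exists (embed rho (v pi) x0 B g pi); split=> [x|x|N x y|N x y].
- exact: embed_c0.
- exact: embed_norm_le1.
- exact: embed_dist_le.
- exact: embed_dist_ge.
Qed.

Lemma unif_embedding_top_embedding (R : realType) (I J X Y : Type)
    (P : I -> X -> X -> R) (d : J -> Y -> Y -> R) (f : X -> Y) :
  unif_embedding P d f -> top_embedding P d f.
Proof.
case=> finj cont cont_inv; split=> // x.
  move=> Jf e /(cont _ _)/[apply] -[K [del [? ? Kdel]]].
  by exists K, del; split=> // y; apply: Kdel.
move=> K del /(cont_inv _ _)/[apply] -[Jf [e [? ? Jfe]]].
by exists Jf, e; split=> // y; apply: Jfe.
Qed.

Lemma unif_embedding_geometric (R : realType) (I X Y : Type)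
    (P : I -> X -> X -> R) (d : I -> Y -> Y -> R) (f : X -> Y) (q : R) :
  0 < q -> q < 1 ->
  (forall i x, P i x x = 0) -> (forall i x y, 0 <= P i x y) ->
  (forall x y, x <> y -> exists i, P i x y <> 0) ->
  (forall i N x y, P i x y < q ^+ N -> d i (f x) (f y) <= q ^+ N.+1) ->
  (forall i N x y, q ^+ N <= P i x y -> q ^+ N.+1 <= d i (f x) (f y)) ->
  unif_embedding P d f.
Proof.
move=> q_gt0 q_lt1 P0 Pge hsep up low.
have small b : 0 < b -> exists N, q ^+ N < b := exists_expr_lt (ltW q_gt0) q_lt1.
have qS N : q ^+ N.+1 <= q ^+ N := ler_wiXn2l (ltW q_gt0) (ltW q_lt1) (leqnSn N).
split.
- move=> x y fxy; apply: contrapT => /hsep[i /eqP Pxy].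
  have [N qN] : exists N, q ^+ N < P i x y by apply: small; rewrite lt_def Pxy Pge.
  have := low i N x y (ltW qN); rewrite fxy; apply/negP; rewrite -ltNge.
  apply: le_lt_trans (up i N.+1 y y _) _; first by rewrite P0 exprn_gt0.
  by rewrite (exprS q N.+1) gtr_pMl ?exprn_gt0.
- move=> Jf e Jf_fin e_gt0; have [N qN] := small _ e_gt0.
  exists Jf, (q ^+ N); split=> // [|x y Pxy j /Pxy/up dxy]; first exact: exprn_gt0.
  exact: le_lt_trans dxy (le_lt_trans (qS N) qN).
- move=> K del K_fin del_gt0; have [N qN] := small _ del_gt0.
  exists K, (q ^+ N.+1); split=> // [|x y dxy k Kk]; first exact: exprn_gt0.
  rewrite ltNge; apply: contraTN (dxy k Kk) => /(le_trans (ltW qN))/(low k).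
  by rewrite -leNgt.
Qed.

Theorem corollary2p5 (R : realType) (L : fieldType) (v : L -> R)
  (hv : nonarch_abs v) (hlc : Llocally_compact v) (hnd : Lnondiscrete v)
  (X : Type) (I : Type) (P : I -> X -> X -> R)
  (hP : forall i, pseudoultrametric (P i))
  (hsep : forall x y : X, x <> y -> exists i, P i x y <> 0)
  (A : I -> Type) (hA : forall i, has_weight (compl_open (P i)) (A i)) :
  (exists f : X -> (forall i, A i -> L),
     (forall x i, in_c0 v (f x i) /\ c0norm v (f x i) <= 1) /\
     top_embedding P (prod_dist v (A := A)) f) /\
  (exists g : X -> (forall i, A i -> L),
     (forall x i, in_c0 v (g x i)) /\
     unif_embedding P (prod_dist v (A := A)) g).
Proof.
have [pi /andP[q_gt0 q_lt1]] := nondiscrete_nabs_gt0_lt1 hv hnd.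
have [h hh] := all_tag (fun i =>
  cid (exists_c0_embedding hv q_gt0 q_lt1 (hP i) (proj1 (hA i)))).
have h_unif : unif_embedding P (prod_dist v (A := A)) (fun x i => h i x).
  apply: (unif_embedding_geometric q_gt0 q_lt1) => // [i x|i x y|i|i].
  - by case: (hP i).
  - by case: (hP i).
  - by case: (hh i).
  - by case: (hh i).
split; exists (fun x i => h i x); split=> //.
- by move=> x i; case: (hh i).
- exact: unif_embedding_top_embedding.
- by move=> x i; case: (hh i).
Qed.
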